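(* Let $K$ be a field of characteristic $p>3$ and $n\ge1$. For every linear form $f\in O_1(n)^*$, the bilinear form $(a\partial,b\partial)\mapsto f(ab)$ ($a,b\in O_1(n)$) is a commutative $2$-cocycle on the Zassenhaus algebra $W_1(n)$, every commutative $2$-cocycle on $W_1(n)$ is of this form, and the map $f\mapsto[(a\partial,b\partial)\mapsto f(ab)]$ is an isomorphism $O_1(n)^*\cong Z^2_{comm}(W_1(n))$.
   Context: $O_1(n)$ is the divided power algebra with basis $x^{(i)}$, $0\le i\le p^n-1$, and multiplication $x^{(i)}x^{(j)}=\binom{i+j}{j}x^{(i+j)}$ (interpreted as $0$ if $i+j>p^n-1$); $\partial$ is its derivation $\partial(x^{(i)})=x^{(i-1)}$, $\partial(x^{(0)})=0$. The Zassenhaus algebra $W_1(n)=\{a\partial: a\in O_1(n)\}$ has bracket $[a\partial,b\partial]=(a\partial(b)-b\partial(a))\partial$. $Z^2_{comm}(L)$ is the space of symmetric bilinear forms $\varphi:L\times L\to K$ with $\varphi([x,y],z)+\varphi([z,x],y)+\varphi([y,z],x)=0$ for all $x,y,z\in L$. *)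

From HB Require Import structures.
From mathcomp Require Import all_boot all_order all_algebra.
Set Implicit Arguments. Unset Strict Implicit. Unset Printing Implicit Defensive.
Import GRing.Theory.
Local Open Scope ring_scope.

(* O_1(n) over K, with N = p^n, is modelled as the row space 'rV[K]_N:
   a row vector a stands for \sum_i a 0 i * x^(i). *)
Notation O1 K N := 'rV[K]_N.

(* divided power multiplication: x^(i) x^(j) = C(i+j, j) x^(i+j), 0 if i+j > N-1 *)
Definition mulO (K : fieldType) (N : nat) (a b : O1 K N) : O1 K N :=
  \row_(k < N) \sum_(i < N) \sum_(j < N | (i + j)%N == k)
                  ('C(k, j))%:R * (a 0 i * b 0 j).

(* the derivation d(x^(i)) = x^(i-1), d(x^(0)) = 0 *)
Definition derO (K : fieldType) (N : nat) (a : O1 K N) : O1 K N :=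
  \row_(k < N) \sum_(i < N | nat_of_ord i == k.+1) a 0 i.

(* Zassenhaus algebra W_1(n) = { a d }, a d <-> a; bracket
   [a d, b d] = (a d(b) - b d(a)) d *)
Definition brW (K : fieldType) (N : nat) (a b : O1 K N) : O1 K N :=
  mulO a (derO b) - mulO b (derO a).

Definition comm_cocycle (K : fieldType) (N : nat) (phi : O1 K N -> O1 K N -> K) : Prop :=
  [/\ (forall (c : K) x y z, phi (c *: x + y) z = c * phi x z + phi y z),
      (forall (c : K) x y z, phi x (c *: y + z) = c * phi x y + phi x z),
      (forall x y, phi x y = phi y x) &
      (forall x y z, phi (brW x y) z + phi (brW z x) y + phi (brW y z) x = 0)].

From HB Require Import structures.
From mathcomp Require Import all_boot all_order all_algebra.
From mathcomp Require Import ring zify.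
Import GRing.Theory.
Set Implicit Arguments. Unset Strict Implicit. Unset Printing Implicit Defensive.
Local Open Scope ring_scope.

(* O_1(n) is commutative and associative with unit x^(0), so for a linear
   form f the six terms of the cyclic sum of f((a b' - b a') c) cancel in pairs.
   Conversely, for a cocycle phi put f := phi(-, x^(0)); then
   psi := phi - f(- -) is a cocycle vanishing on (a, x^(0)). Bracketing with
   x^(0) acts as the derivation, so psi(x^(i), x^(j)) only depends on i + j:
   it equals psi(x^(i+j), x^(0)) = 0 when i + j < N, and otherwise it is some
   psi(x^(N-1), x^(r)); these are killed by the cocycle identity on triples
   (x^(1), x^(j), x^(k)) and (x^(2), x^(N-1), x^(N-2)), using N = 0, 2 != 0 and
   6 != 0 in K. Injectivity holds because f(a) = f(a x^(0)). *)

Section RawLinear.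
Variables (R : pzRingType) (U V : lmodType R) (f : U -> V) (f_linear : linear f).

Definition lin_pack : {linear U -> V} :=
  HB.pack f (GRing.isLinear.Build R U V *:%R f f_linear).

End RawLinear.

Lemma mul_bin_addA i j k :
  ('C(i + j, j) * 'C(i + j + k, k) = 'C(j + k, k) * 'C(i + j + k, j + k))%N.
Proof.
have fij := bin_fact (leq_addl i j); rewrite addnK in fij.
have fijk := bin_fact (leq_addl (i + j) k); rewrite addnK in fijk.
have fjk := bin_fact (leq_addl j k); rewrite addnK in fjk.
have fi_jk := bin_fact (leq_addl i (j + k)); rewrite addnK addnA in fi_jk.
apply/eqP; rewrite -(eqn_pmul2r (fact_gt0 i)) -(eqn_pmul2r (fact_gt0 j)).
rewrite -(eqn_pmul2r (fact_gt0 k)); apply/eqP.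
transitivity (i + j + k)`!.
  by rewrite -fijk -fij; ring.
by rewrite -fi_jk -fjk; ring.
Qed.

Section DividedPowers.
Variables (K : fieldType) (N : nat).
Local Notation O1 := 'rV[K]_N.

(* The basis vector x^(m); out of range ([N <= m]) it is [0], matching the
   convention that x^(i) x^(j) = 0 when i + j >= N. *)
Definition xdp (m : nat) : O1 := \row_(k < N) ((k : nat) == m)%:R.

Lemma xdp_out m : (N <= m)%N -> xdp m = 0.
Proof.
move=> le_N_m; apply/rowP => k; rewrite !mxE.
by rewrite (_ : (k : nat) == m = false) //; apply/negbTE; rewrite neq_ltn (leq_trans _ le_N_m).
Qed.

Lemma row_sum_xdp (a : O1) : a = \sum_(i < N) a 0 i *: xdp i.
Proof.
rewrite {1}[a]row_sum_delta; apply: eq_bigr => i _; congr (_ *: _).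
by apply/rowP => k; rewrite !mxE.
Qed.

Lemma linear_xdp_eq (V : lmodType K) (F G : {linear O1 -> V}) :
  (forall i, (i < N)%N -> F (xdp i) = G (xdp i)) -> F =1 G.
Proof.
move=> eqFG a; rewrite [a]row_sum_xdp !linear_sum.
by apply: eq_bigr => i _; rewrite !linearZ eqFG.
Qed.

Lemma bilinear_xdp_eq (V : lmodType K) (B1 B2 : O1 -> O1 -> V) :
  (forall b, linear (B1 ^~ b)) -> (forall a, linear (B1 a)) ->
  (forall b, linear (B2 ^~ b)) -> (forall a, linear (B2 a)) ->
  (forall i j, (i < N)%N -> (j < N)%N -> B1 (xdp i) (xdp j) = B2 (xdp i) (xdp j)) ->
  forall a b, B1 a b = B2 a b.
Proof.
move=> B1l B1r B2l B2r eqB a b.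
apply: (linear_xdp_eq (F := lin_pack (B1l b)) (G := lin_pack (B2l b))) => i lt_iN.
by apply: (linear_xdp_eq (F := lin_pack (B1r _)) (G := lin_pack (B2r _))) => j lt_jN; apply: eqB.
Qed.

Lemma mulO_linear_l b : linear (fun a : O1 => mulO a b).
Proof.
move=> c x y; apply/rowP => k; rewrite !mxE mulr_sumr -big_split.
apply: eq_bigr => i _; rewrite mulr_sumr -big_split; apply: eq_bigr => j _.
by rewrite !mxE /=; ring.
Qed.

Lemma mulO_linear_r a : linear (mulO a : O1 -> O1).
Proof.
move=> c x y; apply/rowP => k; rewrite !mxE mulr_sumr -big_split.
apply: eq_bigr => i _; rewrite mulr_sumr -big_split; apply: eq_bigr => j _.
by rewrite !mxE /=; ring.
Qed.

Local Notation mulOl b := (lin_pack (mulO_linear_l b)).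
Local Notation mulOr a := (lin_pack (mulO_linear_r a)).

Lemma mul0O b : mulO 0 b = 0 :> O1. Proof. exact: linear0 (mulOl b). Qed.
Lemma mulO0 a : mulO a 0 = 0 :> O1. Proof. exact: linear0 (mulOr a). Qed.
Lemma mulOZl c a b : mulO (c *: a) b = c *: mulO a b :> O1.
Proof. exact: (linearZ_LR (mulOl b) c a). Qed.
Lemma mulOZr c a b : mulO a (c *: b) = c *: mulO a b :> O1.
Proof. exact: (linearZ_LR (mulOr a) c b). Qed.

Lemma mulO_xdp i j : mulO (xdp i) (xdp j) = 'C(i + j, j)%:R *: xdp (i + j).
Proof.
have [le_Ni | lt_iN] := leqP N i.
  by rewrite xdp_out // mul0O xdp_out ?scaler0 ?(leq_trans le_Ni) ?leq_addr.
have [le_Nj | lt_jN] := leqP N j.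
  by rewrite (xdp_out le_Nj) mulO0 xdp_out ?scaler0 ?(leq_trans le_Nj) ?leq_addl.
apply/rowP => k; rewrite !mxE (bigD1 (Ordinal lt_iN)) //= big_mkcond.
rewrite (bigD1 (Ordinal lt_jN)) //= !big1 ?addr0 => [|i' ne_i'i|j' ne_j'j].
- rewrite !mxE !eqxx !mulr1 eq_sym.
  by case: eqP => [<-|]; rewrite ?mulr1 ?mulr0.
- by apply: big1 => j' _; rewrite !mxE (negbTE (ne_i'i : (i' : nat) != i)) mul0r mulr0.
- by case: ifP => // _; rewrite !mxE (negbTE (ne_j'j : (j' : nat) != j)) !mulr0.
Qed.

Lemma derO_xdp0 : derO (xdp 0) = 0.
Proof. by apply/rowP => k; rewrite !mxE big1 // => i /eqP eq_ik1; rewrite mxE eq_ik1. Qed.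

Lemma derO_xdpS j : (j.+1 < N)%N -> derO (xdp j.+1) = xdp j.
Proof.
move=> lt_j1N; apply/rowP => k; rewrite !mxE big_mkcond (bigD1 (Ordinal lt_j1N)) //=.
rewrite big1 => [|i ne_ij1]; last first.
  by case: ifP => // /eqP eq_ik1; rewrite mxE (negbTE (ne_ij1 : (i : nat) != j.+1)).
by rewrite mxE eqxx eqSS eq_sym addr0; case: eqP.
Qed.

Lemma mulOC (a b : O1) : mulO a b = mulO b a.
Proof.
apply: (bilinear_xdp_eq (B1 := @mulO K N) (B2 := fun a b => mulO b a)) => //;
  [exact: mulO_linear_l | exact: mulO_linear_r | exact: mulO_linear_r
  | exact: mulO_linear_l | move=> i j _ _].
by rewrite !mulO_xdp addnC -[in RHS](bin_sub (leq_addl j i)) addnK.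
Qed.

Lemma mulOA (a b c : O1) : mulO (mulO a b) c = mulO a (mulO b c).
Proof.
move: a b; apply: (bilinear_xdp_eq (B1 := fun a b => mulO (mulO a b) c)
                                   (B2 := fun a b => mulO a (mulO b c))).
- by move=> b t x y; rewrite !mulO_linear_l.
- by move=> a t x y; rewrite mulO_linear_r mulO_linear_l.
- by move=> b; apply: mulO_linear_l.
- by move=> a t x y; rewrite mulO_linear_l mulO_linear_r.
move=> i j _ _; move: c.
have lin_ij : linear (fun c => mulO (xdp i) (mulO (xdp j) c)).
  by move=> t x y; rewrite !mulO_linear_r.
apply: (linear_xdp_eq (F := mulOr _) (G := lin_pack lin_ij)) => k _ /=.
by rewrite !mulO_xdp mulOZl mulOZr !mulO_xdp !scalerA -!natrM mul_bin_addA addnA.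
Qed.

Lemma mulO1 (a : O1) : mulO a (xdp 0) = a.
Proof.
have lin_id : linear (@id O1) by [].
apply: (linear_xdp_eq (F := mulOl (xdp 0)) (G := lin_pack lin_id)) => i _ /=.
by rewrite mulO_xdp addn0 bin0 scale1r.
Qed.

Lemma mulOBl a a' b : mulO (a - a') b = mulO a b - mulO a' b :> O1.
Proof. exact: (linearB (mulOl b) a a'). Qed.

Lemma brW_antisym (a b : O1) : brW b a = - brW a b.
Proof. by rewrite /brW opprB. Qed.

Lemma brW_xdp0S j : (j.+1 < N)%N -> brW (xdp 0) (xdp j.+1) = xdp j.
Proof.
by move=> lt_j1N; rewrite /brW derO_xdpS // derO_xdp0 mulO0 subr0 mulO_xdp binn scale1r.
Qed.

Lemma brW_xdpSS i j : (i.+1 < N)%N -> (j.+1 < N)%N ->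
  brW (xdp i.+1) (xdp j.+1) =
  'C(i.+1 + j, j)%:R *: xdp (i.+1 + j) - 'C(j.+1 + i, i)%:R *: xdp (j.+1 + i).
Proof. by move=> lt_i1N lt_j1N; rewrite /brW !derO_xdpS // !mulO_xdp. Qed.

(* The six terms of the cyclic sum are products of x, y, z, x', y', z' in
   which two of the three factors are fixed; commutativity and associativity
   pair them up with opposite signs. *)
Lemma mulO_comm_cocycle (f : {linear O1 -> K^o}) :
  comm_cocycle (fun a b => f (mulO a b)).
Proof.
split=> [c x y z | c x y z | x y | x y z].
- by rewrite mulO_linear_l linearD linearZ.
- by rewrite mulO_linear_r linearD linearZ.
- by congr (f _); apply: mulOC.
have swap (a b c : O1) : mulO (mulO a b) c = mulO (mulO c b) a.
  by rewrite mulOC (mulOC a) mulOA.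
rewrite -!linearD /brW !mulOBl (swap z (derO y)) (swap z (derO x)) (swap y (derO z)).
by rewrite !addrA !subrK subrr linear0.
Qed.
End DividedPowers.

Lemma comm_cocycleB (K : fieldType) (N : nat) (phi1 phi2 : 'rV[K]_N -> 'rV[K]_N -> K) :
  comm_cocycle phi1 -> comm_cocycle phi2 ->
  comm_cocycle (fun a b => phi1 a b - phi2 a b).
Proof.
case=> lin1l lin1r sym1 cyc1 [lin2l lin2r sym2 cyc2]; split=> [c x y z|c x y z|x y|x y z].
- by rewrite lin1l lin2l; ring.
- by rewrite lin1r lin2r; ring.
- by rewrite sym1 sym2.
have -> : forall a1 b1 c1 a2 b2 c2 : K,
    (a1 - a2) + (b1 - b2) + (c1 - c2) = (a1 + b1 + c1) - (a2 + b2 + c2).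
  by move=> *; ring.
by rewrite cyc1 cyc2 subrr.
Qed.

Section CocycleVanishing.
Variables (K : fieldType) (N : nat).
Hypotheses (N_gt4 : (4 < N)%N) (N_eq0 : N%:R = 0 :> K).
Hypotheses (two_neq0 : 2%:R != 0 :> K) (six_neq0 : 6%:R != 0 :> K).
Variable psi : 'rV[K]_N -> 'rV[K]_N -> K.
Hypotheses (psi_cocycle : comm_cocycle psi) (psi_unit : forall a, psi a (xdp K N 0) = 0).

Local Notation xdp := (xdp K N).
Local Notation s i j := (psi (xdp i) (xdp j)).

Lemma psi_linear_l z : linear (fun x => psi x z : K^o).
Proof. by case: psi_cocycle => lin _ _ _ c x y; apply: lin. Qed.

Lemma psi_linear_r x : linear (fun z => psi x z : K^o).
Proof. by case: psi_cocycle => _ lin _ _ c y z; apply: lin. Qed.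

Local Notation psil z := (lin_pack (psi_linear_l z)).

Lemma psiC x y : psi x y = psi y x.
Proof. by case: psi_cocycle. Qed.

Lemma psi_cyclic x y z : psi (brW x y) z + psi (brW z x) y + psi (brW y z) x = 0.
Proof. by case: psi_cocycle. Qed.

Lemma psi0l z : psi 0 z = 0. Proof. exact: (linear0 (psil z)). Qed.
Lemma psiNl x z : psi (- x) z = - psi x z. Proof. exact: (linearN (psil z) x). Qed.
Lemma psiZl c x z : psi (c *: x) z = c * psi x z. Proof. exact: (linearZ_LR (psil z) c x). Qed.
Lemma psiBl x y z : psi (x - y) z = psi x z - psi y z. Proof. exact: (linearB (psil z) x y). Qed.

(* Bracketing with the unit x^(0) acts as the derivation, so the cyclic
   identity with z = x^(0) moves one degree from one argument to the other. *)
Lemma cocycle_shift i j : (i.+1 < N)%N -> (j.+1 < N)%N -> s i j.+1 = s i.+1 j.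
Proof.
move=> lt_i1N lt_j1N; have := psi_cyclic (xdp i.+1) (xdp j.+1) (xdp 0).
rewrite psi_unit add0r brW_xdp0S // brW_antisym brW_xdp0S // psiNl.
by move/eqP; rewrite addr_eq0 opprK => /eqP ->; apply: psiC.
Qed.

Lemma cocycle_shiftn d i j : (i + d < N)%N -> (j + d < N)%N -> s i (j + d) = s (i + d) j.
Proof.
elim: d i => [|d IH] i lt_idN lt_jdN; first by rewrite !addn0.
by rewrite addnS cocycle_shift ?IH ?addSnnS //; lia.
Qed.

Lemma cocycle_low i j : (i + j < N)%N -> s i j = 0.
Proof. by move=> lt_ijN; rewrite -[j]add0n cocycle_shiftn ?psi_unit //; lia. Qed.

Lemma cocycle_high i j : (i < N)%N -> (j < N)%N -> (N <= i + j)%N ->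
  s i j = s (N - 1) (i + j - (N - 1)).
Proof.
move=> lt_iN lt_jN le_N_ij.
have := @cocycle_shiftn (N - 1 - i) i (i + j - (N - 1)) ltac:(lia) ltac:(lia).
by rewrite (_ : i + j - (N - 1) + (N - 1 - i) = j)%N ?subnKC //; lia.
Qed.

Lemma natrB_char m : (m <= N)%N -> (N - m)%:R = - m%:R :> K.
Proof. by move=> le_mN; rewrite natrB // N_eq0 sub0r. Qed.

(* 'C(N - 1, 2) = (N - 1) (N - 2) / 2, which is 1 modulo the characteristic. *)
Lemma binN1_N3 : 'C(N - 1, N - 3)%:R = 1 :> K.
Proof.
rewrite (_ : N - 3 = (N - 1) - 2)%N ?bin_sub; try lia.
apply: (mulfI two_neq0); have := mul_bin_left (N - 1) 1; rewrite bin1 => E.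
rewrite -natrM E natrM mulr1 (_ : N - 1 - 1 = N - 2)%N; last lia.
by rewrite !natrB_char; try lia; ring.
Qed.

Lemma cocycle_high_diff j k : (1 < j)%N -> (0 < k)%N -> (j < N)%N -> (k < N)%N ->
  (N < j + k)%N -> (j%:R - k%:R) * s j k = 0.
Proof.
case: j k => [|j] [|k] // lt1j _ lt_j1N lt_k1N lt_N_jk.
have [lt1N le_N_jk le_N_kj] : [/\ 1 < N, N <= j.+1 + k & N <= k.+1 + j]%N by split; lia.
have := psi_cyclic (xdp 1) (xdp j.+1) (xdp k.+1).
rewrite brW_xdpSS // brW_antisym !brW_xdpSS // !(xdp_out K le_N_jk, xdp_out K le_N_kj).
rewrite !scaler0 subrr psi0l addr0 !add1n !addn0 !binSn !bin0 !scale1r.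
by rewrite psiNl !psiBl !psiZl (psiC (xdp k.+1)) => <-; ring.
Qed.

Lemma cocycle_top1 : s (N - 1) 1 = 0.
Proof.
have lt0N : (0 < N)%N by lia.
have [lt1N lt2N lt_N2_N lt_N3_N] : [/\ 1 < N, 2 < N, N - 2 < N & (N - 3).+1 < N]%N.
  by split; lia.
have [eN1 eN1' eN2] : [/\ 2 + (N - 3) = N - 1, (N - 3).+1 + 1 = N - 1 & (N - 3).+1 = N - 2]%N.
  by split; lia.
have [le_N_2N2 le_N_N22] : [/\ N <= 2 + (N - 2) & N <= N - 2 + 2]%N by split; lia.
have [e1 e1'] : [/\ 2 + (N - 2) - (N - 1) = 1 & N - 2 + 2 - (N - 1) = 1]%N by split; lia.
have := psi_cyclic (xdp 1) (xdp 2) (xdp (N - 3).+1).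
rewrite brW_xdpSS // brW_antisym !brW_xdpSS //.
rewrite !add1n !addn0 !binSn !bin0 !scale1r bin1 eN1 eN1' eN2.
rewrite psiNl !psiBl !psiZl (cocycle_high _ _ le_N_2N2) // (cocycle_high _ _ le_N_N22) //.
rewrite e1 e1' binN1_N3 (natrB_char (_ : 1 <= N)%N) ?(natrB_char (_ : 2 <= N)%N) //.
move=> E; have : 6%:R * s (N - 1) 1 = 0 by rewrite -E; ring.
by move/eqP; rewrite mulf_eq0 (negPf six_neq0) => /eqP.
Qed.

Lemma cocycle_top_top : s (N - 1) (N - 1) = 0.
Proof.
have lt0N : (0 < N)%N by lia.
have [lt2N lt_N1_N lt_N2_N] : [/\ 2 < N, (N - 2).+1 < N & (N - 3).+1 < N]%N by split; lia.
have [le1 le2 le3 le4] : [/\ N <= 2 + (N - 2), N <= (N - 2).+1 + 1,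
    N <= (N - 2).+1 + (N - 3) & N <= (N - 3).+1 + (N - 2)]%N by split; lia.
have [eN1 eN1' eN2] : [/\ (N - 3).+1 + 1 = N - 1, 2 + (N - 3) = N - 1 & (N - 2).+1 = N - 1]%N.
  by split; lia.
have := psi_cyclic (xdp 2) (xdp (N - 2).+1) (xdp (N - 3).+1).
rewrite brW_xdpSS // brW_antisym !brW_xdpSS // !(xdp_out K le1, xdp_out K le2, xdp_out K le3, xdp_out K le4).
rewrite !scaler0 !subrr !psi0l add0r addr0 bin1 eN1 eN1' eN2.
rewrite psiNl !psiBl !psiZl binN1_N3 (natrB_char (_ : 1 <= N)%N) //.
move=> E; have : 2%:R * s (N - 1) (N - 1) = 0 by rewrite -[RHS]oppr0 -E; ring.
by move/eqP; rewrite mulf_eq0 (negPf two_neq0) => /eqP.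
Qed.

Lemma cocycle_top r : (r < N)%N -> s (N - 1) r = 0.
Proof.
move=> lt_rN; have [lt_r2 | le2r] := ltnP r 2.
  by case: r lt_rN lt_r2 => [|[|r]] _ lt_r2; [exact: psi_unit | exact: cocycle_top1 | ].
have [le_N1_r | lt_r_N1] := leqP (N - 1) r.
  by rewrite (_ : r = N - 1)%N ?cocycle_top_top //; lia.
have [le1N le2N lt_r1N lt_N2N eN1] :
    [/\ 1 <= N, 2 <= N, r.+1 < N, (N - 2).+1 < N & (N - 2).+1 = N - 1]%N by split; lia.
have := @cocycle_high_diff r (N - 1) ltac:(lia) ltac:(lia) ltac:(lia) ltac:(lia) ltac:(lia).
have := @cocycle_high_diff r.+1 (N - 2) ltac:(lia) ltac:(lia) ltac:(lia) ltac:(lia) ltac:(lia).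
rewrite -cocycle_shift // eN1 (psiC (xdp r)) !natrB_char // => e2 e1.
have : 2%:R * s (N - 1) r = (r.+1%:R - - 2%:R) * s (N - 1) r - (r%:R - - 1) * s (N - 1) r.
  by rewrite -addn1 natrD; ring.
rewrite e1 e2 subrr.
by move/eqP; rewrite mulf_eq0 (negPf two_neq0) => /eqP.
Qed.

Lemma comm_cocycle_eq0 a b : psi a b = 0.
Proof.
apply: (@bilinear_xdp_eq K N K^o psi (fun _ _ => 0)) => //.
- exact: psi_linear_l.
- exact: psi_linear_r.
- by move=> b' c x y; rewrite scaler0 addr0.
- by move=> a' c x y; rewrite scaler0 addr0.
move=> i j lt_iN lt_jN; have [lt_ijN | le_N_ij] := ltnP (i + j) N.
  exact: cocycle_low.
by rewrite cocycle_high // cocycle_top //; lia.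
Qed.
End CocycleVanishing.

Unset Implicit Arguments.

Theorem proposition2p6 (K : fieldType) (p n : nat)
    (hp : prime p) (hp3 : (3 < p)%N) (hchar : p \in [pchar K]) (hn : (1 <= n)%N) :
  (forall f : {linear O1 K (p ^ n) -> K^o},
      comm_cocycle (fun a b => f (mulO a b)))
  /\ (forall phi : O1 K (p ^ n) -> O1 K (p ^ n) -> K,
      comm_cocycle phi ->
      exists f : {linear O1 K (p ^ n) -> K^o},
        forall a b, phi a b = f (mulO a b))
  /\ (forall f g : {linear O1 K (p ^ n) -> K^o},
      (forall a b, f (mulO a b) = g (mulO a b)) -> forall a, f a = g a).
Proof.
split; first exact: mulO_comm_cocycle.
split; last by move=> f g eq_fg a; rewrite -(mulO1 a) eq_fg.
have N_gt4 : (4 < p ^ n)%N.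
  have p_gt4 : (4 < p)%N by case: (p =P 4) hp => [-> //|]; lia.
  by rewrite (leq_trans p_gt4) // -{1}(expn1 p) leq_pexp2l // prime_gt0.
have N_eq0 : (p ^ n)%:R = 0 :> K by rewrite natrX (pcharf0 hchar) expr0n eqn0Ngt hn.
have small_neq0 m : (0 < m < p)%N -> m%:R != 0 :> K.
  by case/andP=> m_gt0 lt_mp; rewrite -(dvdn_pcharf hchar) gtnNdvd.
have two_neq0 : 2%:R != 0 :> K by apply: small_neq0; lia.
have six_neq0 : 6%:R != 0 :> K.
  by rewrite (natrM _ 2 3) mulf_neq0 // small_neq0 //; lia.
move=> phi phi_cocycle.
have f_linear : linear (fun a => phi a (xdp K (p ^ n) 0) : K^o).
  by case: phi_cocycle => lin _ _ _ c x y; apply: lin.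
pose f := lin_pack f_linear.
exists f => a b; apply/eqP; rewrite -subr_eq0; apply/eqP.
have psi_cocycle := comm_cocycleB phi_cocycle (mulO_comm_cocycle f).
apply: (comm_cocycle_eq0 N_gt4 N_eq0 two_neq0 six_neq0 psi_cocycle) => x.
by rewrite /= mulO1 subrr.
Qed.
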